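(* Let $\lambda,\mu\in\mathbb{C}$ satisfy one of: (i) $\mu\notin\frac12\mathbb{Z}$; (ii) $\mu\in\frac12+\mathbb{Z}$ and $\lambda\notin\{-3,-1,1\}$; (iii) $\mu\in\mathbb{Z}$ and $\lambda\neq-1$. Let $L=\widetilde{L_{\lambda,\mu}}^1$ and let $\Delta_j(L)$ be the space of $\frac12$-derivations of $L$ of degree $j\in\mathbb{Z}$. If $\lambda\neq1$, then $\Delta_0(L)=\langle\mathrm{Id}\rangle$ and $\Delta_j(L)=0$ for $j\neq0$. If $\lambda=1$ (so we are in case (i) or (iii)), then $\Delta_j(L)$ consists exactly of the maps $c\,\delta_{j,0}\mathrm{Id}+\varphi_{j,\alpha}$ with $c,\alpha\in\mathbb{C}$, where $\varphi_{j,\alpha}(L_n)=\alpha M_{n+j}$ for all $n\in\mathbb{Z}$ and $\varphi_{j,\alpha}$ vanishes on all $M_n$, $Y_{n+\frac12}$ and on $C_L$.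
   Context: For $\lambda,\mu\in\mathbb{C}$, $\widetilde{L_{\lambda,\mu}}^1$ is the complex Lie algebra with basis $\{L_n,M_n,Y_{n+\frac12},C_L\mid n\in\mathbb{Z}\}$, $C_L$ central, and nonzero brackets $[L_m,L_n]=(n-m)L_{m+n}+\frac{m^3-m}{12}\delta_{m+n,0}C_L$, $[L_m,M_n]=(n-\lambda m+2\mu)M_{m+n}$, $[L_m,Y_{n+\frac12}]=(n+\frac12-\frac{\lambda+1}{2}m+\mu)Y_{m+n+\frac12}$, $[Y_{m+\frac12},Y_{n+\frac12}]=(n-m)M_{m+n+1}$. It is $\frac12\mathbb{Z}$-graded by $W_0=\langle L_0,M_0,C_L\rangle$, $W_n=\langle L_n,M_n\rangle$ ($n\neq0$), $W_{n+\frac12}=\langle Y_{n+\frac12}\rangle$. A $\frac12$-derivation is a linear map $\varphi$ with $\varphi([x,y])=\frac12([\varphi(x),y]+[x,\varphi(y)])$; it has degree $g$ if $\varphi(W_h)\subseteq W_{g+h}$ for all $h\in\frac12\mathbb{Z}$. *)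

(* The Lie algebra L~_{lambda,mu}^1 over the complex numbers,
   realized as the free C-vector space (finitely supported formal linear
   combinations, multinomials' monoid-algebra type {malg C[idx]}) on the basis
   {L_n, M_n, Y_{n+1/2}, C_L | n in Z}. *)
From HB Require Import structures.
From mathcomp Require Import all_boot all_order all_algebra.
From mathcomp Require Import Rstruct.
From mathcomp Require Import complex.
From mathcomp Require Import finmap.
From mathcomp.multinomials Require Import monalg.

Set Implicit Arguments.
Unset Strict Implicit.
Unset Printing Implicit Defensive.

Import Order.TTheory GRing.Theory Num.Theory.
Local Open Scope ring_scope.

Definition C : Type := (Rdefinitions.R)[i].
HB.instance Definition _ := GRing.Field.on C.

(* Basis indices: IL n = L_n, IM n = M_n, IY n = Y_{n+1/2}, IC = C_L. *)
Inductive idx : Type := IL of int | IM of int | IY of int | IC.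

Definition idx_code (k : idx) : nat * int :=
  match k with IL n => (0%N, n) | IM n => (1%N, n) | IY n => (2%N, n) | IC => (3%N, 0) end.
Definition idx_decode (p : nat * int) : option idx :=
  match p with
  | (0%N, n) => Some (IL n) | (1%N, n) => Some (IM n)
  | (2%N, n) => Some (IY n) | (3%N, _) => Some IC | _ => None end.
Lemma idx_codeK : pcancel idx_code idx_decode. Proof. by case. Qed.
HB.instance Definition _ := Countable.copy idx (pcan_type idx_codeK).

Definition LV : Type := {malg C[idx]}.

Definition bv (k : idx) : LV := << k >>.

Definition br_basis (lam mu : C) (a b : idx) : LV :=
  match a, b with
  | IL m, IL n => ((n - m)%:~R) *: bv (IL (m + n))
                  + ((m ^+ 3 - m)%:~R / 12%:R * (m + n == 0)%:R) *: bv IC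
  | IL m, IM n => (n%:~R - lam * m%:~R + 2%:R * mu) *: bv (IM (m + n))
  | IM m, IL n => - ((m%:~R - lam * n%:~R + 2%:R * mu) *: bv (IM (n + m)))
  | IL m, IY n => (n%:~R + 2%:R^-1 - (lam + 1) / 2%:R * m%:~R + mu) *: bv (IY (m + n))
  | IY m, IL n => - ((m%:~R + 2%:R^-1 - (lam + 1) / 2%:R * n%:~R + mu) *: bv (IY (n + m)))
  | IY m, IY n => ((n - m)%:~R) *: bv (IM (m + n + 1))
  | _, _ => 0
  end.

Definition lbr (lam mu : C) (x y : LV) : LV :=
  \sum_(a <- msupp x) \sum_(b <- msupp y) (x@_a * y@_b) *: br_basis lam mu a b.

Definition deg (k : idx) : rat :=
  match k with
  | IL n => n%:~R | IM n => n%:~R | IY n => n%:~R + 2%:R^-1 | IC => 0 end.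

Definition inW (h : rat) (x : LV) : Prop :=
  forall k, k \in msupp x -> deg k = h.

Definition is_half_int (h : rat) : Prop := exists k : int, h = k%:~R / 2%:R.

Definition has_degree (g : rat) (phi : LV -> LV) : Prop :=
  forall h, is_half_int h -> forall x, inW h x -> inW (g + h) (phi x).

Definition half_derivation (lam mu : C) (phi : {linear LV -> LV}) : Prop :=
  forall x y, phi (lbr lam mu x y)
              = 2%:R^-1 *: (lbr lam mu (phi x) y + lbr lam mu x (phi y)).

Definition phi_ja (j : int) (alpha : C) (x : LV) : LV :=
  \sum_(a <- msupp x)
     x@_a *: (match a with IL n => alpha *: bv (IM (n + j)) | _ => 0 end).

Definition in_half_Z (z : C) : Prop := exists n : int, z = n%:~R / 2%:R.
Definition in_Z (z : C) : Prop := exists n : int, z = n%:~R.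
Definition in_half_plus_Z (z : C) : Prop := exists n : int, z = n%:~R + 2%:R^-1.

Definition params_ok (lam mu : C) : Prop :=
  ~ in_half_Z mu
  \/ (in_half_plus_Z mu /\ lam != -3%:R /\ lam != -1 /\ lam != 1)
  \/ (in_Z mu /\ lam != -1).

(* A half-derivation phi of degree j is determined by its values on the basis, and the grading
   leaves only a few coordinates: phi(L_n) = a_n L_{n+j} + b_n M_{n+j} + e_n C_L,
   phi(M_n) = p_n L_{n+j} + q_n M_{n+j} + f_n C_L, phi(Y_{n+1/2}) = g_n Y_{n+j+1/2} and
   phi(C_L) = r L_j + s M_j + t C_L.  Comparing coefficients in
   2 phi[x, y] = [phi x, y] + [x, phi y] on pairs of basis vectors gives linear recurrences:
   [Y, Y] kills p and f; [L, L] makes a constant, kills r and, through the cubic central term,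
   forces a = 0 unless j = 0; [L, Y] and [Y, Y] give g = q = a, where the resonance
   n + 1/2 + mu = j is overcome unless lam = -3; on M-coordinates [L, L] makes b constant with
   (lam - 1) b = 0.  So phi = a Id + phi_{j,b}, and conversely these maps are half-derivations
   of degree j when lam = 1 or b = 0: by bilinearity only [L_m, L_n] needs checking. *)

From HB Require Import structures.
From mathcomp Require Import all_boot all_order all_algebra.
From mathcomp Require Import Rstruct complex finmap.
From mathcomp.multinomials Require Import monalg.
From mathcomp Require Import zify ring.
Import GRing.Theory Num.Theory.
Local Open Scope ring_scope.

Definition linext (v : idx -> LV) (x : LV) : LV := \sum_(a <- msupp x) x@_a *: v a.

Lemma mcoeff_bv k k' : (bv k)@_k' = (k == k')%:R.
Proof. exact: mcoeffU. Qed.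

Lemma scale_bv (c : C) k : << c *g k >> = c *: bv k.
Proof. by apply/malgP => k'; rewrite mcoeffZ !mcoeffU mulr_natr. Qed.

Section LinearExtension.
Variable v : idx -> LV.

Lemma linext_sub x (S : {fset idx}) :
  (msupp x `<=` S)%fset -> linext v x = \sum_(a <- S) x@_a *: v a.
Proof.
move=> sub; apply: big_fset_incl => // a _ /mcoeff_outdom ->.
by rewrite scale0r.
Qed.

Lemma linextD x y : linext v (x + y) = linext v x + linext v y.
Proof.
rewrite !(@linext_sub _ (msupp x `|` msupp y)%fset) ?msuppD_le ?fsubsetUl ?fsubsetUr //.
by rewrite -big_split; apply: eq_bigr => a _; rewrite mcoeffD scalerDl.
Qed.

Lemma linextZ c x : linext v (c *: x) = c *: linext v x.
Proof.
rewrite (@linext_sub _ (msupp x)) ?msuppZ_le // scaler_sumr.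
by apply: eq_bigr => a _; rewrite mcoeffZ scalerA.
Qed.

Lemma linext_bv k : linext v (bv k) = v k.
Proof.
by rewrite (@linext_sub _ [fset k]%fset) ?msuppU_le // big_seq_fset1 mcoeff_bv eqxx scale1r.
Qed.

End LinearExtension.

Lemma linextE x : linext bv x = x.
Proof. by rewrite {2}(monalgE x); apply: eq_bigr => a _; rewrite scale_bv. Qed.

Lemma eq_linext {v w : idx -> LV} x : v =1 w -> linext v x = linext w x.
Proof. by move=> vw; apply: eq_bigr => a _; rewrite vw. Qed.

Lemma linext_addv v w x : linext (fun a => v a + w a) x = linext v x + linext w x.
Proof. by rewrite -big_split; apply: eq_bigr => a _; rewrite scalerDr. Qed.

Lemma linext_scalev c v x : linext (fun a => c *: v a) x = c *: linext v x.
Proof. by rewrite scaler_sumr; apply: eq_bigr => a _; rewrite !scalerA mulrC. Qed.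

Lemma linext_linear {f : LV -> LV} :
  linear f -> forall v x, f (linext v x) = linext (fun a => f (v a)) x.
Proof.
move=> fL v x; have f0 : f 0 = 0.
  by apply: (addrI (f 0)); rewrite addr0 -{1}(scale1r (f 0)) -fL scale1r addr0.
have fZ c y : f (c *: y) = c *: f y by rewrite -[c *: y]addr0 fL f0 addr0.
rewrite /linext; elim: (msupp x : seq idx) => [|a s IH]; first by rewrite !big_nil.
by rewrite !big_cons -[_ *: v a]scale1r fL scale1r fZ IH.
Qed.

Lemma eq_bilinear_bv (F G : LV -> LV -> LV) :
  (forall y, linear (F^~ y)) -> (forall x, linear (F x)) ->
  (forall y, linear (G^~ y)) -> (forall x, linear (G x)) ->
  (forall a b, F (bv a) (bv b) = G (bv a) (bv b)) -> F =2 G.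
Proof.
move=> Fl Fr Gl Gr FG x y.
rewrite -(linextE x) (linext_linear (Fl y)) (linext_linear (Gl y)).
apply: eq_linext => a; rewrite -(linextE y) (linext_linear (Fr _)) (linext_linear (Gr _)).
exact: eq_linext.
Qed.

Section Bracket.
Variables lam mu : C.
Local Notation br := (br_basis lam mu).
Local Notation lb := (lbr lam mu).

Lemma lbrE x y : lb x y = linext (fun a => linext (br a) y) x.
Proof.
apply: eq_bigr => a _; rewrite scaler_sumr.
by apply: eq_bigr => b _; rewrite scalerA.
Qed.

Lemma lbrDl x x' y : lb (x + x') y = lb x y + lb x' y.
Proof. by rewrite !lbrE linextD. Qed.
Lemma lbrZl c x y : lb (c *: x) y = c *: lb x y.
Proof. by rewrite !lbrE linextZ. Qed.
Lemma lbrDr x y y' : lb x (y + y') = lb x y + lb x y'.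
Proof. by rewrite !lbrE -linext_addv; apply: eq_linext => a; rewrite linextD. Qed.
Lemma lbrZr c x y : lb x (c *: y) = c *: lb x y.
Proof. by rewrite !lbrE -linext_scalev; apply: eq_linext => a; rewrite linextZ. Qed.

Lemma lbr0l y : lb 0 y = 0.
Proof. by rewrite -(scale0r 0) lbrZl !scale0r. Qed.
Lemma lbr0r x : lb x 0 = 0.
Proof. by rewrite -(scale0r 0) lbrZr !scale0r. Qed.

Lemma lbr_bv a b : lb (bv a) (bv b) = br a b.
Proof. by rewrite lbrE !linext_bv. Qed.

End Bracket.

Definition eq_idxE :=
  ((fun a b : int => erefl : (IL a == IL b) = (a == b)),
   (fun a b : int => erefl : (IM a == IM b) = (a == b)),
   (fun a b : int => erefl : (IY a == IY b) = (a == b)),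
   (fun a b : int => erefl : (IL a == IM b) = false),
   (fun a b : int => erefl : (IL a == IY b) = false),
   (fun a : int => erefl : (IL a == IC) = false),
   (fun a b : int => erefl : (IM a == IL b) = false),
   (fun a b : int => erefl : (IM a == IY b) = false),
   (fun a : int => erefl : (IM a == IC) = false),
   (fun a b : int => erefl : (IY a == IL b) = false),
   (fun a b : int => erefl : (IY a == IM b) = false),
   (fun a : int => erefl : (IY a == IC) = false),
   (fun a : int => erefl : (IC == IL a) = false),
   (fun a : int => erefl : (IC == IM a) = false),
   (fun a : int => erefl : (IC == IY a) = false),
   (erefl : (IC == IC) = true)).

Lemma half_int_neq_int (a b : int) : (a%:~R + 2%:R^-1 : rat) != b%:~R.
Proof.
apply/eqP => ab.
have : ((2 * a + 1)%:~R : rat) = (2 * b)%:~R by rewrite intrM -ab; field.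
by move/intr_inj; lia.
Qed.

Lemma deg_half_int k : is_half_int (deg k).
Proof.
case: k => [n|n|n|] /=; rewrite /is_half_int.
- by exists (2 * n); rewrite intrM mulrAC divff // mul1r.
- by exists (2 * n); rewrite intrM mulrAC divff // mul1r.
- by exists (2 * n + 1); rewrite intrD intrM mulrDl mulrAC divff // mul1r.
- by exists 0; rewrite mul0r.
Qed.

Lemma inW_bv k : inW (deg k) (bv k).
Proof. by move=> k' /(fsubsetP (@msuppU_le _ _ k 1)); rewrite inE => /eqP ->. Qed.

Lemma mcoeff_inW [h x k] : inW h x -> deg k != h -> x@_k = 0.
Proof.
by move=> xh; apply: contraNeq; rewrite mcoeff_eq0 negbK => /xh ->.
Qed.

Lemma inW_intE (h : int) x : inW h%:~R x ->
  x = x@_(IL h) *: bv (IL h) + x@_(IM h) *: bv (IM h) + x@_IC *: bv IC.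
Proof.
move=> xh; apply/malgP => k; rewrite !mcoeffD !mcoeffZ !mcoeff_bv.
case: k => [n|n|n|]; rewrite ?eq_idxE ?mulr0 ?mulr1 ?addr0 ?add0r.
- have [<-|nh] := eqVneq h n; first by rewrite mulr1.
  by rewrite mulr0 (mcoeff_inW xh) //= eqr_int eq_sym.
- have [<-|nh] := eqVneq h n; first by rewrite mulr1.
  by rewrite mulr0 (mcoeff_inW xh) //= eqr_int eq_sym.
- by rewrite (mcoeff_inW xh) //= half_int_neq_int.
- by [].
Qed.

Lemma inW_int_mcoeffC (h : int) x : h != 0 -> inW h%:~R x -> x@_IC = 0.
Proof. by move=> h0 xh; rewrite (mcoeff_inW xh) //= eq_sym intr_eq0. Qed.

Lemma inW_halfE (h : int) x : inW (h%:~R + 2%:R^-1) x -> x = x@_(IY h) *: bv (IY h).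
Proof.
move=> xh; apply/malgP => k; rewrite mcoeffZ mcoeff_bv.
case: k => [n|n|n|]; rewrite ?eq_idxE ?mulr0.
- by rewrite (mcoeff_inW xh) //= eq_sym half_int_neq_int.
- by rewrite (mcoeff_inW xh) //= eq_sym half_int_neq_int.
- have [<-|nh] := eqVneq h n; first by rewrite mulr1.
  by rewrite mulr0 (mcoeff_inW xh) //= (can_eq (addrK _)) eqr_int eq_sym.
- by rewrite (mcoeff_inW xh) //= eq_sym -(mulr0z 1) half_int_neq_int.
Qed.

Lemma inW0 h : inW h 0.
Proof. by move=> k; rewrite msupp0 inE. Qed.

Lemma inWD h x y : inW h x -> inW h y -> inW h (x + y).
Proof.
move=> xh yh k /(fsubsetP (msuppD_le x y)); rewrite inE => /orP[]; [exact: xh | exact: yh].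
Qed.

Lemma inWZ h c x : inW h x -> inW h (c *: x).
Proof. by move=> xh k /(fsubsetP (msuppZ_le c x)) /xh. Qed.

Lemma inW_linext g h v x :
  (forall a, inW (g + deg a) (v a)) -> inW h x -> inW (g + h) (linext v x).
Proof.
move=> vg xh; rewrite /linext big_seq.
apply: big_ind => [|y z|a /xh <-]; [exact: inW0 | exact: inWD | exact/inWZ/vg].
Qed.

(* Formal linear combinations of basis vectors: brackets and phi are evaluated on explicit lists,
   so that the coefficient identities of a half-derivation are computed by [cbn] rather than by
   rewriting in the monoid algebra. *)
Definition comb (l : seq (C * idx)) : LV := \sum_(p <- l) p.1 *: bv p.2.

Definition comb_coef (l : seq (C * idx)) (k : idx) : C :=
  foldr (fun p c => p.1 * (p.2 == k)%:R + c) 0 l.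

Definition scale_comb (c : C) (l : seq (C * idx)) := [seq (c * p.1, p.2) | p <- l].

Lemma comb_cons p l : comb (p :: l) = p.1 *: bv p.2 + comb l.
Proof. exact: big_cons. Qed.

Lemma comb_cat l l' : comb (l ++ l') = comb l + comb l'.
Proof. exact: big_cat. Qed.

Lemma comb_scale c l : comb (scale_comb c l) = c *: comb l.
Proof.
rewrite /comb big_map scaler_sumr.
by apply: eq_bigr => p _; rewrite scalerA.
Qed.

Lemma mcoeff_comb l k : (comb l)@_k = comb_coef l k.
Proof.
elim: l => [|p l IH]; first by rewrite /comb big_nil mcoeff0.
by rewrite comb_cons mcoeffD mcoeffZ mcoeff_bv IH.
Qed.

Lemma bv_comb k : bv k = comb [:: (1, k)].
Proof. by rewrite comb_cons /comb big_nil addr0 scale1r. Qed.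

Section BracketList.
Variables lam mu : C.

Definition br_list (a b : idx) : seq (C * idx) :=
  match a, b with
  | IL m, IL n => [:: ((n - m)%:~R, IL (m + n));
                      ((m ^+ 3 - m)%:~R / 12%:R * (m + n == 0)%:R, IC)]
  | IL m, IM n => [:: (n%:~R - lam * m%:~R + 2%:R * mu, IM (m + n))]
  | IM m, IL n => [:: (- (m%:~R - lam * n%:~R + 2%:R * mu), IM (n + m))]
  | IL m, IY n => [:: (n%:~R + 2%:R^-1 - (lam + 1) / 2%:R * m%:~R + mu, IY (m + n))]
  | IY m, IL n => [:: (- (m%:~R + 2%:R^-1 - (lam + 1) / 2%:R * n%:~R + mu), IY (n + m))]
  | IY m, IY n => [:: ((n - m)%:~R, IM (m + n + 1))]
  | _, _ => [::]
  end.

Lemma br_basis_comb a b : br_basis lam mu a b = comb (br_list a b).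
Proof.
by case: a => [m|m|m|]; case: b => [n|n|n|];
  rewrite /= ?comb_cons /comb ?big_nil ?addr0 ?scaleNr.
Qed.

Definition lbr_list (l l' : seq (C * idx)) : seq (C * idx) :=
  flatten [seq flatten [seq scale_comb (p.1 * q.1) (br_list p.2 q.2) | q <- l'] | p <- l].

Lemma lbr_comb l l' : lbr lam mu (comb l) (comb l') = comb (lbr_list l l').
Proof.
elim: l => [|p l IH]; first by rewrite /comb !big_nil lbr0l.
rewrite comb_cons lbrDl lbrZl IH /= comb_cat; congr (_ + _).
elim: l' {IH} => [|q l' IH]; first by rewrite /comb !big_nil lbr0r scaler0.
rewrite comb_cons lbrDr lbrZr lbr_bv br_basis_comb scalerDr IH /=.
by rewrite comb_cat comb_scale scalerA.
Qed.

End BracketList.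

Ltac decide_int := repeat match goal with
  | |- context [(?x == ?y :> int)] =>
    first [ have ->: (x == y) = true by apply/eqP; lia
          | have ->: (x == y) = false by apply/eqP; lia ] end.

(* [linear_combination e] proves [lhs = rhs] by checking [lhs - rhs = e] in the field, where [e]
   combines terms [residual H], which stand for [a - b] and vanish, for hypotheses [H : a = b]. *)
Definition residual {a b : C} (_ : a = b) := a - b.

Lemma residualE (a b : C) (e : a = b) : residual e = 0.
Proof. by rewrite /residual e subrr. Qed.

Ltac linear_combination e :=
  apply/eqP; rewrite -subr_eq0; apply/eqP;
  transitivity e; [rewrite /residual; first [ring | by field] | by rewrite !residualE; ring].

Lemma intr_neq0 {n : int} : n != 0 -> (n%:~R : C) != 0.
Proof. by rewrite (intr_eq0 (Rdefinitions.R)[i]). Qed.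

Lemma eq_of_mul_sub {f x y : C} : f != 0 -> f * (x - y) = 0 -> x = y.
Proof. by move=> f0 /eqP; rewrite mulf_eq0 (negbTE f0) subr_eq0 => /eqP. Qed.

Lemma phi_jaE j alpha :
  phi_ja j alpha =1 linext (fun a => if a is IL n then alpha *: bv (IM (n + j)) else 0).
Proof. by []. Qed.

Lemma phi_ja_bv j alpha k :
  phi_ja j alpha (bv k) = if k is IL n then alpha *: bv (IM (n + j)) else 0.
Proof. by rewrite phi_jaE linext_bv. Qed.

Lemma phi_jaD j alpha x y : phi_ja j alpha (x + y) = phi_ja j alpha x + phi_ja j alpha y.
Proof. by rewrite !phi_jaE linextD. Qed.

Lemma phi_jaZ j alpha c x : phi_ja j alpha (c *: x) = c *: phi_ja j alpha x.
Proof. by rewrite !phi_jaE linextZ. Qed.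

Lemma phi_ja_linear j alpha : linear (phi_ja j alpha).
Proof. by move=> c x y; rewrite phi_jaD phi_jaZ. Qed.

Lemma phi_ja0 j x : phi_ja j 0 x = 0.
Proof.
rewrite phi_jaE (@eq_linext _ (fun _ => 0)) => [|[] * //]; last by rewrite scale0r.
by rewrite /linext big1 // => a _; rewrite scaler0.
Qed.

Section HalfDerivation.
Variables (lam mu : C) (j : int) (phi : {linear LV -> LV}).
Hypothesis phi_half : half_derivation lam mu phi.
Hypothesis phi_deg : has_degree j%:~R phi.

Definition cLL n := (phi (bv (IL n)))@_(IL (n + j)).
Definition cLM n := (phi (bv (IL n)))@_(IM (n + j)).
Definition cLC n := (phi (bv (IL n)))@_IC.
Definition cML n := (phi (bv (IM n)))@_(IL (n + j)).
Definition cMM n := (phi (bv (IM n)))@_(IM (n + j)).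
Definition cMC n := (phi (bv (IM n)))@_IC.
Definition cYY n := (phi (bv (IY n)))@_(IY (n + j)).
Definition cCL := (phi (bv IC))@_(IL j).
Definition cCM := (phi (bv IC))@_(IM j).
Definition cCC := (phi (bv IC))@_IC.

Lemma phi_bv_inW k : inW (j%:~R + deg k) (phi (bv k)).
Proof. exact: phi_deg (deg_half_int k) _ (inW_bv k). Qed.

Lemma phi_bvL n :
  phi (bv (IL n)) = cLL n *: bv (IL (n + j)) + cLM n *: bv (IM (n + j)) + cLC n *: bv IC.
Proof. by apply: inW_intE; rewrite addrC intrD; apply: phi_bv_inW (IL n). Qed.

Lemma phi_bvM n :
  phi (bv (IM n)) = cML n *: bv (IL (n + j)) + cMM n *: bv (IM (n + j)) + cMC n *: bv IC.
Proof. by apply: inW_intE; rewrite addrC intrD; apply: phi_bv_inW (IM n). Qed.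

Lemma phi_bvY n : phi (bv (IY n)) = cYY n *: bv (IY (n + j)).
Proof. by apply: inW_halfE; rewrite (addrC n) intrD -addrA; apply: phi_bv_inW (IY n). Qed.

Lemma phi_bvC : phi (bv IC) = cCL *: bv (IL j) + cCM *: bv (IM j) + cCC *: bv IC.
Proof. by apply: inW_intE; rewrite -(addr0 j%:~R); apply: phi_bv_inW IC. Qed.

Lemma cLC_eq0_deg n : n + j != 0 -> cLC n = 0.
Proof.
by move=> nj; apply: inW_int_mcoeffC nj _; rewrite addrC intrD; apply: phi_bv_inW (IL n).
Qed.

Lemma cCC_eq0_deg : j != 0 -> cCC = 0.
Proof. by move=> j0; apply: inW_int_mcoeffC j0 _; rewrite -(addr0 j%:~R); apply: phi_bv_inW IC. Qed.

Definition phi_list (k : idx) : seq (C * idx) :=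
  match k with
  | IL n => [:: (cLL n, IL (n + j)); (cLM n, IM (n + j)); (cLC n, IC)]
  | IM n => [:: (cML n, IL (n + j)); (cMM n, IM (n + j)); (cMC n, IC)]
  | IY n => [:: (cYY n, IY (n + j))]
  | IC => [:: (cCL, IL j); (cCM, IM j); (cCC, IC)]
  end.

Lemma phi_bv_comb k : phi (bv k) = comb (phi_list k).
Proof.
rewrite /comb; case: k => [n|n|n|]; rewrite !big_cons big_nil addr0 ?addrA.
- exact: phi_bvL.
- exact: phi_bvM.
- exact: phi_bvY.
- exact: phi_bvC.
Qed.

Definition phi_comb_list (l : seq (C * idx)) := flatten [seq scale_comb p.1 (phi_list p.2) | p <- l].

Lemma phi_comb l : phi (comb l) = comb (phi_comb_list l).
Proof.
elim: l => [|p l IH]; first by rewrite /comb !big_nil raddf0.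
by rewrite comb_cons linearD linearZ IH /= comb_cat comb_scale phi_bv_comb.
Qed.

Lemma half_derivation_coef a b k :
  2%:R * comb_coef (phi_comb_list (br_list lam mu a b)) k =
  comb_coef (lbr_list lam mu (phi_list a) [:: (1, b)]) k
  + comb_coef (lbr_list lam mu [:: (1, a)] (phi_list b)) k.
Proof.
have := phi_half (bv a) (bv b).
rewrite lbr_bv br_basis_comb phi_comb !phi_bv_comb (bv_comb a) (bv_comb b) !lbr_comb.
move/(congr1 (mcoeff k)); rewrite mcoeffZ mcoeffD !mcoeff_comb => ->.
by rewrite mulrA divff ?mul1r // (pnatr_eq0 (Rdefinitions.R)[i]).
Qed.

Ltac bracket_coef a b k :=
  have := half_derivation_coef a b k;
  cbn [comb_coef phi_comb_list lbr_list phi_list br_list scale_comb flatten map cat foldr fst snd];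
  rewrite ?eq_idxE; decide_int;
  rewrite ?mulr1n ?mulr0n ?subrr ?(mulr0, mulr1, addr0, add0r, subr0).

Lemma coef_YY_L (m n : int) : (n - m)%:~R * cML (m + n + 1) = 0.
Proof.
bracket_coef (IY m) (IY n) (IL (m + n + 1 + j)); move=> e.
by linear_combination (2%:R^-1 * residual e).
Qed.

Lemma coef_YY_C (m n : int) : (n - m)%:~R * cMC (m + n + 1) = 0.
Proof.
bracket_coef (IY m) (IY n) IC; move=> e.
by linear_combination (2%:R^-1 * residual e).
Qed.

Lemma coef_YY_M (m n : int) : 2%:R * (n - m)%:~R * cMM (m + n + 1) =
  cYY m * (n - (m + j))%:~R + cYY n * (n + j - m)%:~R.
Proof.
bracket_coef (IY m) (IY n) (IM (m + n + 1 + j)); move=> e.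
by linear_combination (residual e).
Qed.

Lemma coef_LL_L (m n : int) : m + n != 0 -> 2%:R * (n - m)%:~R * cLL (m + n) =
  cLL m * (n - (m + j))%:~R + cLL n * (n + j - m)%:~R.
Proof.
move=> mn; bracket_coef (IL m) (IL n) (IL (m + n + j)); move=> e.
by linear_combination (residual e).
Qed.

Lemma coef_LL_L0 (m : int) : 2%:R * ((- m - m)%:~R * cLL 0 + (m ^+ 3 - m)%:~R / 12%:R * cCL) =
  cLL m * (- m - (m + j))%:~R + cLL (- m) * (- m + j - m)%:~R.
Proof.
bracket_coef (IL m) (IL (- m)) (IL (m + - m + j)); move=> e.
by linear_combination (residual e).
Qed.

Lemma coef_LL_M (m n : int) : m + n != 0 -> 2%:R * (n - m)%:~R * cLM (m + n) =
  - (cLM m * ((m + j)%:~R - lam * n%:~R + 2%:R * mu))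
  + cLM n * ((n + j)%:~R - lam * m%:~R + 2%:R * mu).
Proof.
move=> mn; bracket_coef (IL m) (IL n) (IM (m + n + j)); move=> e.
by linear_combination (residual e).
Qed.

Lemma coef_LL_M0 (m : int) : 2%:R * ((- m - m)%:~R * cLM 0 + (m ^+ 3 - m)%:~R / 12%:R * cCM) =
  - (cLM m * ((m + j)%:~R + lam * m%:~R + 2%:R * mu))
  + cLM (- m) * ((- m + j)%:~R - lam * m%:~R + 2%:R * mu).
Proof.
bracket_coef (IL m) (IL (- m)) (IM (m + - m + j)); move=> e.
by linear_combination (residual e).
Qed.

Lemma coef_LL_C (m : int) : j != 0 -> 2%:R * (- m - j - m)%:~R * cLC (- j) =
  cLL m * (((m + j) ^+ 3 - (m + j))%:~R / 12%:R) + cLL (- m - j) * ((m ^+ 3 - m)%:~R / 12%:R).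
Proof.
move=> j0; bracket_coef (IL m) (IL (- m - j)) IC.
rewrite (_ : m + (- m - j) = - j) => [e|]; last by lia.
by linear_combination (residual e).
Qed.

Lemma coef_LL_C0 (m : int) : j = 0 ->
  2%:R * ((- m - m)%:~R * cLC 0 + (m ^+ 3 - m)%:~R / 12%:R * cCC) =
  (cLL m + cLL (- m)) * ((m ^+ 3 - m)%:~R / 12%:R).
Proof.
move=> j0; bracket_coef (IL m) (IL (- m)) IC; rewrite j0 => e.
by linear_combination (residual e).
Qed.

Lemma coef_LY (m n : int) :
  2%:R * (n%:~R + 2%:R^-1 - (lam + 1) / 2%:R * m%:~R + mu) * cYY (m + n) =
  cLL m * (n%:~R + 2%:R^-1 - (lam + 1) / 2%:R * (m + j)%:~R + mu)
  + cYY n * ((n + j)%:~R + 2%:R^-1 - (lam + 1) / 2%:R * m%:~R + mu).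
Proof.
bracket_coef (IL m) (IY n) (IY (m + n + j)); move=> e.
by linear_combination (residual e).
Qed.

Lemma cML_eq0 (k : int) : cML k = 0.
Proof.
have H1 := coef_YY_L 0 (k - 1); rewrite (_ : 0 + (k - 1) + 1 = k) in H1; last by lia.
have H2 := coef_YY_L (-1) k; rewrite (_ : -1 + k + 1 = k) in H2; last by lia.
by linear_combination (2%:R^-1 * (residual H2 - residual H1)).
Qed.

Lemma cMC_eq0 (k : int) : cMC k = 0.
Proof.
have H1 := coef_YY_C 0 (k - 1); rewrite (_ : 0 + (k - 1) + 1 = k) in H1; last by lia.
have H2 := coef_YY_C (-1) k; rewrite (_ : -1 + k + 1 = k) in H2; last by lia.
by linear_combination (2%:R^-1 * (residual H2 - residual H1)).
Qed.

Lemma cLL_const_ne (n : int) : n != j -> cLL n = cLL 0.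
Proof.
move=> nj; have [->|n0] := eqVneq n 0; first by [].
have H := coef_LL_L 0 n; rewrite !add0r subr0 in H.
have nj0 : (n - j)%:~R != 0 :> C by apply: intr_neq0; rewrite subr_eq0.
by apply: (eq_of_mul_sub nj0); linear_combination (residual (H n0)).
Qed.

Lemma cLL_const (n : int) : cLL n = cLL 0.
Proof.
have [->|/cLL_const_ne//] := eqVneq n j.
have [->|j0] := eqVneq j 0; first by [].
have H := coef_LL_L (- j) (j + j) ltac:(apply/eqP; lia).
have Hm : cLL (- j) = cLL 0 by apply: cLL_const_ne; apply/eqP; lia.
have Hp : cLL (j + j) = cLL 0 by apply: cLL_const_ne; apply/eqP; lia.
rewrite (_ : - j + (j + j) = j) ?Hm ?Hp in H; last by lia.
apply: (eq_of_mul_sub (intr_neq0 j0)).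
by linear_combination (6%:R^-1 * residual H).
Qed.

Lemma cCL_eq0 : cCL = 0.
Proof.
have H := coef_LL_L0 2; rewrite (cLL_const 2) (cLL_const (-2)) in H.
by linear_combination (residual H).
Qed.

Lemma cLL0_eq0 : j != 0 -> cLL 0 = 0.
Proof.
(* The third difference in m: the left-hand sides are affine in m, the cubic terms add up to cLL 0. *)
move=> j0; have H0 := coef_LL_C 0 j0; have H1 := coef_LL_C 1 j0.
have H2 := coef_LL_C 2 j0; have H3 := coef_LL_C 3 j0.
rewrite (cLL_const (- 0 - j)) in H0; rewrite (cLL_const 1) (cLL_const (- 1 - j)) in H1.
rewrite (cLL_const 2) (cLL_const (- 2 - j)) in H2; rewrite (cLL_const 3) (cLL_const (- 3 - j)) in H3.
by linear_combination (residual H0 - 3%:R * residual H1 + 3%:R * residual H2 - residual H3).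
Qed.

Lemma j_mul_cLL0 : j%:~R * cLL 0 = 0.
Proof. by have [->|/cLL0_eq0->] := eqVneq j 0; rewrite ?mul0r ?mulr0. Qed.

Lemma cLC_eq0 (n : int) : cLC n = 0.
Proof.
have [nj|nj] := eqVneq (n + j) 0; last exact: cLC_eq0_deg.
have [j0|j0] := eqVneq j 0.
  have H := coef_LL_C0 1 j0; rewrite (_ : n = 0) //; last by lia.
  by linear_combination ((- 4%:R)^-1 * residual H).
rewrite (_ : n = - j); last by lia.
have H := coef_LL_C 0 j0; rewrite (cLL_const (- 0 - j)) cLL0_eq0 // in H.
apply: (eq_of_mul_sub (intr_neq0 j0)).
by linear_combination ((- 2%:R)^-1 * residual H).
Qed.

Lemma cCCE : cCC = if j == 0 then cLL 0 else 0.
Proof.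
have [j0|j0] := eqVneq j 0; last exact: cCC_eq0_deg.
have H := coef_LL_C0 2 j0; rewrite (cLL_const 2) (cLL_const (-2)) in H.
by linear_combination (residual H + 8%:R * residual (cLC_eq0 0)).
Qed.

Lemma cYY_rec (k : int) : (k%:~R + 2%:R^-1 + mu - j%:~R) * (cYY k - cLL 0) = 0.
Proof.
have H := coef_LY 0 k; rewrite !add0r in H.
by linear_combination (residual H + (1 - (lam + 1) / 2%:R) * residual j_mul_cLL0).
Qed.

Lemma cYY_resonant (k m : int) : k%:~R + 2%:R^-1 + mu - j%:~R = 0 -> m != 0 ->
  cYY (k - m) = cLL 0.
Proof.
move=> hw m0; apply: (eq_of_mul_sub (intr_neq0 (n := - m) _)); first by rewrite oppr_eq0.
by linear_combination (residual (cYY_rec (k - m)) - (cYY (k - m) - cLL 0) * residual hw).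
Qed.

Local Notation u := (j%:~R + 2%:R * mu).

Lemma cLM_rec (n : int) :
  (n%:~R - u) * (cLM n - cLM 0) = (lam - 1) * n%:~R * cLM 0.
Proof.
have [->|n0] := eqVneq n 0; first by ring.
have H := coef_LL_M 0 n; rewrite !add0r in H.
by linear_combination (residual (H n0)).
Qed.

Lemma lam_sub1_cLM0 : (lam - 1) * cLM 0 = 0.
Proof.
(* Eliminate cLM 1, ..., cLM 4 between [L_1, L_2], [L_1, L_3] and the recurrence cLM_rec. *)
have [->|l1] := eqVneq lam 1; first by rewrite subrr mul0r.
have [g1 g2] := (cLM_rec 1, cLM_rec 2); have [g3 g4] := (cLM_rec 3, cLM_rec 4).
have X12 := coef_LL_M 1 2 isT; have X13 := coef_LL_M 1 3 isT.
rewrite (_ : 1 + 2 = 3 :> int) // in X12; rewrite (_ : 1 + 3 = 4 :> int) // in X13.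
have P1 : (lam - 1) * (u * (lam + 2%:R) - 3%:R * lam) * cLM 0 = 0.
  by linear_combination ((3%:R - u) * (2%:R - u) * (1 - u) / 2%:R * residual X12
     - (2%:R - u) * (1 - u) * residual g3
     - (3%:R - u) * (2%:R - u) * (1 + u - 2%:R * lam) / 2%:R * residual g1
     + (3%:R - u) * (1 - u) * (2%:R + u - lam) / 2%:R * residual g2).
have P2 : (lam - 1) * (u * (lam + 2%:R) - 4%:R * lam) * cLM 0 = 0.
  by linear_combination ((4%:R - u) * (3%:R - u) * (1 - u) / 6%:R * residual X13
     - 2%:R * (3%:R - u) * (1 - u) / 3%:R * residual g4
     - (4%:R - u) * (3%:R - u) * (1 + u - 3%:R * lam) / 6%:R * residual g1
     + (4%:R - u) * (1 - u) * (3%:R + u - lam) / 6%:R * residual g3).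
have [l0|l0] := eqVneq lam 0; last first.
  by apply: (eq_of_mul_sub l0); linear_combination (residual P1 - residual P2).
have [u0|u0] := eqVneq u 0; last first.
  rewrite l0 in P1 *; apply: (eq_of_mul_sub u0).
  by linear_combination (2%:R^-1 * residual P1).
have B1 : cLM 1 = 0.
  by linear_combination (residual g1 + (cLM 1 - cLM 0) * residual u0 + cLM 0 * residual l0).
have gm := cLM_rec (-1).
have Bm1 : cLM (-1) = 0.
  by linear_combination (- residual gm - (cLM (-1) - cLM 0) * residual u0 + cLM 0 * residual l0).
have H := coef_LL_M0 1.
have B0 : cLM 0 = 0.
  by linear_combination (- 4%:R^-1 * residual H
    + 4%:R^-1 * ((1 + j)%:~R + lam + 2%:R * mu) * residual B1
    - 4%:R^-1 * ((-1 + j)%:~R - lam + 2%:R * mu) * residual Bm1).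
by rewrite B0 mulr0.
Qed.

Lemma cLM_const_ne (n : int) : n%:~R - u != 0 -> cLM n = cLM 0.
Proof.
move=> hn; apply: (eq_of_mul_sub hn).
by linear_combination (residual (cLM_rec n) + n%:~R * residual lam_sub1_cLM0).
Qed.

Lemma cLM_const (n : int) : cLM n = cLM 0.
Proof.
have [hu|/cLM_const_ne//] := eqVneq (n%:~R - u) 0.
have [->|n0] := eqVneq n 0; first by [].
have Bm : cLM (- n) = cLM 0.
  apply: cLM_const_ne; rewrite (_ : _ - u = (- (n + n))%:~R); last first.
    by linear_combination (residual hu).
  by apply: intr_neq0; apply/eqP; lia.
have Bp : cLM (n + n) = cLM 0.
  apply: cLM_const_ne; rewrite (_ : _ - u = n%:~R); last first.
    by linear_combination (residual hu).
  exact: intr_neq0.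
have H := coef_LL_M (- n) (n + n) ltac:(apply/eqP; lia).
rewrite (_ : - n + (n + n) = n) ?Bm ?Bp in H; last by lia.
apply: (eq_of_mul_sub (intr_neq0 (n := 3 * n) _)); first by apply/eqP; lia.
by linear_combination (2%:R^-1 * residual H + 3%:R * n%:~R / 2%:R * residual lam_sub1_cLM0).
Qed.

Lemma cCM_eq0 : cCM = 0.
Proof.
have H := coef_LL_M0 2; rewrite (cLM_const 2) (cLM_const (-2)) in H.
by linear_combination (residual H - 4%:R * residual lam_sub1_cLM0).
Qed.

Lemma cLM0_eq0 : lam != 1 -> cLM 0 = 0.
Proof.
move=> lam_ne1; apply: (eq_of_mul_sub (f := lam - 1)); first by rewrite subr_eq0.
by rewrite subr0 lam_sub1_cLM0.
Qed.

Lemma cLL0_scale_shift (f : int -> idx) (n : int) :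
  cLL 0 *: bv (f (n + j)) = (if j == 0 then cLL 0 else 0) *: bv (f n).
Proof. by have [->|/cLL0_eq0->] := eqVneq j 0; rewrite ?addr0 ?scale0r. Qed.

Section NonResonant.
Hypothesis lam_ne_m3 : in_half_plus_Z mu -> lam != - 3%:R.

Lemma cYY_const (k : int) : cYY k = cLL 0.
Proof.
(* At the resonance cYY_rec says nothing; compare [L_1, Y_{k-1}] and [L_2, Y_{k-2}] instead. *)
have /eqP := cYY_rec k; rewrite mulf_eq0 => /orP[/eqP hw|]; last by rewrite subr_eq0 => /eqP.
have l3 : (lam + 3%:R) / 2%:R != 0.
  rewrite mulf_neq0 ?invr_neq0 ?(pnatr_eq0 (Rdefinitions.R)[i]) // addr_eq0.
  apply: lam_ne_m3; exists (j - k - 1).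
  by linear_combination (residual hw).
have H1 := coef_LY 1 (k - 1); have H2 := coef_LY 2 (k - 2).
have G1 := cYY_resonant k 1 hw isT; have G2 := cYY_resonant k 2 hw isT.
rewrite (_ : 1 + (k - 1) = k) ?(cLL_const 1) ?G1 in H1; last by lia.
rewrite (_ : 2 + (k - 2) = k) ?(cLL_const 2) ?G2 in H2; last by lia.
apply: (eq_of_mul_sub l3).
by linear_combination (2%:R^-1 * (residual H1 - residual H2)).
Qed.

Lemma cMM_const (k : int) : cMM k = cLL 0.
Proof.
have H1 := coef_YY_M 0 (k - 1); have H2 := coef_YY_M (-1) k.
rewrite (_ : 0 + (k - 1) + 1 = k) ?(cYY_const 0) ?(cYY_const (k - 1)) in H1;
  last by lia.
rewrite (_ : -1 + k + 1 = k) ?(cYY_const (-1)) ?(cYY_const k) in H2;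
  last by lia.
by linear_combination (4%:R^-1 * (residual H2 - residual H1)).
Qed.

Lemma phi_bv_form k :
  phi (bv k) = (if j == 0 then cLL 0 else 0) *: bv k + phi_ja j (cLM 0) (bv k).
Proof.
rewrite phi_ja_bv; case: k => [n|n|n|] /=.
- by rewrite phi_bvL (cLL_const n) (cLM_const n) cLC_eq0 scale0r addr0 cLL0_scale_shift.
- rewrite phi_bvM cML_eq0 (cMM_const n) cMC_eq0 !scale0r add0r !addr0.
  exact: cLL0_scale_shift.
- by rewrite phi_bvY (cYY_const n) addr0 cLL0_scale_shift.
- by rewrite phi_bvC cCL_eq0 cCM_eq0 cCCE !scale0r !add0r addr0.
Qed.

Lemma phi_form x : phi x = (if j == 0 then cLL 0 else 0) *: x + phi_ja j (cLM 0) x.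
Proof.
rewrite -[in LHS](linextE x) (linext_linear (linearP phi)) (eq_linext _ phi_bv_form).
by rewrite linext_addv linext_scalev linextE -(linext_linear (phi_ja_linear _ _)) linextE.
Qed.

End NonResonant.

End HalfDerivation.

Arguments phi_form {lam mu j phi}.
Arguments cLM0_eq0 {lam mu j phi}.

Lemma params_ok_lam3 {lam mu : C} : params_ok lam mu -> in_half_plus_Z mu -> lam != - 3%:R.
Proof.
case=> [not_half|[[_ [lam3 _]]|[[n mu_n] _]]] [k mu_k] //.
  by case: not_half; exists (2 * k + 1); linear_combination (residual mu_k).
have : (2 * n - 2 * k - 1)%:~R != 0 :> C by apply: intr_neq0; apply/eqP; lia.
by case/eqP; linear_combination (2%:R * (residual mu_k - residual mu_n)).
Qed.

(* Only [L_m, L_n] gives a nonzero value, and it is where lam = 1 is needed. *)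
Lemma phi_ja_br j alpha mu a b :
  phi_ja j alpha (br_basis 1 mu a b) =
  2%:R^-1 *: (lbr 1 mu (phi_ja j alpha (bv a)) (bv b) + lbr 1 mu (bv a) (phi_ja j alpha (bv b))).
Proof.
have phi_ja00 : phi_ja j alpha 0 = 0 by rewrite -(scale0r 0) phi_jaZ !scale0r.
rewrite br_basis_comb /comb !phi_ja_bv.
case: a => [m|m|m|]; case: b => [n|n|n|];
  rewrite /= ?big_cons ?big_nil ?phi_jaD ?phi_jaZ ?phi_ja_bv /= ?lbr0l ?lbr0r ?lbrZl ?lbrZr ?lbr_bv /=
    ?phi_ja00 ?scaler0 ?addr0 ?add0r ?scaler0 //.
rewrite (_ : n + (m + j) = m + n + j); last by lia.
rewrite (_ : m + (n + j) = m + n + j); last by lia.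
rewrite scalerN -scaleNr !scalerA -scalerDl scalerA; congr (_ *: _).
by field.
Qed.

Lemma scale_half_linear (V : lmodType C) (c : C) (a b a' b' : V) :
  2%:R^-1 *: (c *: a + b + (c *: a' + b')) = c *: (2%:R^-1 *: (a + a')) + 2%:R^-1 *: (b + b').
Proof. by rewrite !scalerDr !scalerA mulrC addrACA. Qed.

Lemma phi_ja_half_derivation mu j alpha x y :
  phi_ja j alpha (lbr 1 mu x y) =
  2%:R^-1 *: (lbr 1 mu (phi_ja j alpha x) y + lbr 1 mu x (phi_ja j alpha y)).
Proof.
apply: (@eq_bilinear_bv (fun x y => phi_ja j alpha (lbr 1 mu x y))
  (fun x y => 2%:R^-1 *: (lbr 1 mu (phi_ja j alpha x) y + lbr 1 mu x (phi_ja j alpha y)))).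
- by move=> z c u v; rewrite lbrDl lbrZl phi_jaD phi_jaZ.
- by move=> z c u v; rewrite lbrDr lbrZr phi_jaD phi_jaZ.
- move=> z c u v; rewrite phi_jaD phi_jaZ !lbrDl !lbrZl.
  exact: scale_half_linear.
- move=> z c u v; rewrite phi_jaD phi_jaZ !lbrDr !lbrZr.
  exact: scale_half_linear.
- by move=> a b; rewrite lbr_bv phi_ja_br.
Qed.

Lemma scale_add_half (V : lmodType C) (d : C) (u v w : V) :
  d *: u + 2%:R^-1 *: (v + w) = 2%:R^-1 *: (d *: u + v + (d *: u + w)).
Proof.
rewrite !scalerDr !scalerA addrACA -scalerDl; congr (_ *: _ + _).
by field.
Qed.

Lemma half_derivation_scale_add_phi_ja lam mu (j : int) (c alpha : C)
    (phi : {linear LV -> LV}) :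
  lam = 1 \/ alpha = 0 ->
  (forall x, phi x = (if j == 0 then c else 0) *: x + phi_ja j alpha x) ->
  half_derivation lam mu phi /\ has_degree j%:~R phi.
Proof.
move=> lam1_or_alpha0 phiE; split=> [x y|h _ x xh].
  have pj_half : phi_ja j alpha (lbr lam mu x y) =
      2%:R^-1 *: (lbr lam mu (phi_ja j alpha x) y + lbr lam mu x (phi_ja j alpha y)).
    case: lam1_or_alpha0 => [->|->]; first exact: phi_ja_half_derivation.
    by rewrite !phi_ja0 lbr0l lbr0r addr0 scaler0.
  by rewrite !phiE lbrDl lbrDr !lbrZl !lbrZr pj_half scale_add_half.
rewrite phiE; apply: inWD.
  by case: eqP => [->|_]; rewrite ?add0r ?scale0r; [apply: inWZ | apply: inW0].
rewrite phi_jaE; apply: inW_linext xh => -[n|n|n|]; try exact: inW0.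
by apply/inWZ; rewrite /= addrC -intrD; apply: inW_bv (IM (n + j)).
Qed.

Theorem mainTheorem5 (lam mu : C) (Hpar : params_ok lam mu) :
  (lam != 1 ->
    forall (j : int) (phi : {linear LV -> LV}),
      (half_derivation lam mu phi /\ has_degree j%:~R phi) <->
      (exists c : C, forall x, phi x = (if j == 0 then c else 0) *: x))
  /\
  (lam = 1 ->
    forall (j : int) (phi : {linear LV -> LV}),
      (half_derivation lam mu phi /\ has_degree j%:~R phi) <->
      (exists c alpha : C, forall x,
          phi x = (if j == 0 then c else 0) *: x + phi_ja j alpha x)).
Proof.
have lam_ne_m3 := params_ok_lam3 Hpar.
split=> [lam_ne1|lam1] j phi; split.
- case=> phi_half phi_deg; exists (cLL j phi 0) => x.
  by rewrite (phi_form phi_half phi_deg lam_ne_m3) (cLM0_eq0 phi_half phi_deg lam_ne1) phi_ja0 addr0.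
- case=> c phiE; apply: (@half_derivation_scale_add_phi_ja _ _ _ c 0); first by right.
  by move=> x; rewrite phiE phi_ja0 addr0.
- case=> phi_half phi_deg; exists (cLL j phi 0), (cLM j phi 0).
  exact: phi_form phi_half phi_deg lam_ne_m3.
- by case=> c [alpha phiE]; apply: half_derivation_scale_add_phi_ja phiE; left.
Qed.
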